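(* Let $S:\mathbb{R}^m\times\mathbb{R}^n\to\mathbb{R}^q$ be bilinear with lifted operator $\mathscr{S}$, let $\mathcal{K}'\subseteq\mathbb{R}^{m\times n}$ and $\mathcal{M}=\mathcal{K}'-\mathcal{K}'$. Let $X\in\mathcal{N}(\mathscr{S},2)\cap\mathcal{M}\setminus\{0\}$ be a given $m\times n$ real matrix and $\delta\in(0,1)$. Let $\mathbf{M}=xy^T=\sigma uv^T$ be a random rank one matrix, where $x\in\mathbb{R}^m$, $y\in\mathbb{R}^n$ are random vectors satisfying: (A1) $x$ and $y$ each have zero mean and identity covariance; (A2) $x$ and $y$ are mutually independent; (A3) $\|x\|_2$ and $x/\|x\|_2$ are independent, and $\|y\|_2$ and $y/\|y\|_2$ are independent; here $u=x/\|x\|_2$, $v=y/\|y\|_2$. Then $\Pr(\|P_{\mathcal{C}(X)}u\|_2^2\ge1-\delta)\le\frac{2}{m(1-\delta)}$ and $\Pr(\|P_{\mathcal{R}(X)}v\|_2^2\ge1-\delta)\le\frac{2}{n(1-\delta)}$.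
   Context: For $j=1,\dots,q$ let $S_j$ be the unique matrix with $(S(x,y))_j=x^TS_jy$; the lifted operator is $(\mathscr{S}(W))_j=\operatorname{tr}(S_j^TW)$. $\mathcal{N}(\mathscr{S},k)=\{X:\operatorname{rank}(X)\le k,\ \mathscr{S}(X)=0\}$; $\mathcal{K}'-\mathcal{K}'=\{X_1-X_2:X_1,X_2\in\mathcal{K}'\}$. $\mathcal{C}(X)$, $\mathcal{R}(X)$ are the column and row spaces of $X$, and $P_{\mathcal{V}}$ is the orthogonal projection matrix onto a subspace $\mathcal{V}$. *)

From HB Require Import structures.
From mathcomp Require Import all_boot all_order all_algebra.
From mathcomp Require Import all_classical all_reals all_analysis.
Set Implicit Arguments. Unset Strict Implicit. Unset Printing Implicit Defensive.
Import Order.TTheory GRing.Theory Num.Theory.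
Local Open Scope classical_set_scope.
Local Open Scope ring_scope.

Definition bilinear_map (R : pzRingType) (m n q : nat)
  (S : 'cV[R]_m -> 'cV[R]_n -> 'cV[R]_q) : Prop :=
  (forall y a x1 x2, S (a *: x1 + x2) y = a *: S x1 y + S x2 y) /\
  (forall x a y1 y2, S x (a *: y1 + y2) = a *: S x y1 + S x y2).

(* S_j : the unique matrix with (S(x,y))_j = x^T S_j y (for bilinear S),
   i.e. (S_j)_{ab} = (S(e_a, e_b))_j. *)
Definition Smat (R : pzRingType) (m n q : nat)
  (S : 'cV[R]_m -> 'cV[R]_n -> 'cV[R]_q) (j : 'I_q) : 'M[R]_(m, n) :=
  \matrix_(a, b) S (delta_mx a 0) (delta_mx b 0) j 0.

Definition lifted (R : pzRingType) (m n q : nat)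
  (S : 'cV[R]_m -> 'cV[R]_n -> 'cV[R]_q) (W : 'M[R]_(m, n)) : 'cV[R]_q :=
  \col_j \tr ((Smat S j)^T *m W).

Definition Nset (R : fieldType) (m n q : nat)
  (S : 'cV[R]_m -> 'cV[R]_n -> 'cV[R]_q) (k : nat) : set 'M[R]_(m, n) :=
  [set X | (\rank X <= k)%N /\ lifted S X = 0].

Definition diffset (R : pzRingType) (m n : nat) (K : set 'M[R]_(m, n))
  : set 'M[R]_(m, n) :=
  [set Z | exists X1 X2, K X1 /\ K X2 /\ Z = X1 - X2].

(* Column space C(X) and row space R(X), as subspaces (%MS row-space
   representation): C(X) is the row space of X^T, R(X) that of X. *)
Definition is_orth_proj (R : fieldType) (k d : nat)
  (P : 'M[R]_d) (V : 'M[R]_(k, d)) : Prop :=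
  P^T = P /\ P *m P = P /\ (P == V)%MS.

Definition sqnorm (R : pzRingType) (d : nat) (v : 'cV[R]_d) : R :=
  \sum_i (v i 0) ^+ 2.

Definition norm2 (R : rcfType) (d : nat) (v : 'cV[R]_d) : R :=
  Num.sqrt (sqnorm v).

(* Random vector from its coordinates; normalized vector (0/0 = 0). *)
Definition rvec (T R : Type) (d : nat) (x : 'I_d -> T -> R) (t : T) : 'cV[R]_d :=
  \col_i x i t.
Definition rdir (T : Type) (R : rcfType) (d : nat) (x : 'I_d -> T -> R) (t : T)
  : 'cV[R]_d := (norm2 (rvec x t))^-1 *: rvec x t.

Definition box (T R : Type) (d : nat) (x : 'I_d -> T -> R) (A : 'I_d -> set R)
  : set T := [set t | forall i, A i (x i t)].

(* Mutual independence of the random vectors x and y (on the generating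
   pi-system of measurable rectangles of the product Borel sigma-algebras). *)
Definition indep_vec {dT} {T : measurableType dT} {R : realType}
  (P : probability T R) (m n : nat) (x : 'I_m -> T -> R) (y : 'I_n -> T -> R)
  : Prop :=
  forall (A : 'I_m -> set R) (B : 'I_n -> set R),
    (forall i, measurable (A i)) -> (forall j, measurable (B j)) ->
    P (box x A `&` box y B) = (P (box x A) * P (box y B))%E.

Definition mean0_idcov {dT} {T : measurableType dT} {R : realType}
  (P : probability T R) (m : nat) (x : 'I_m -> {RV P >-> R}) : Prop :=
  (forall i, (x i : T -> R) \in Lfun P 2%:E) /\
  (forall i, ('E_P[x i] = 0)%E) /\
  (forall i j, covariance P (x i) (x j) = ((i == j)%:R)%:E).

Definition norm_dir_indep {dT} {T : measurableType dT} {R : realType}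
  (P : probability T R) (m : nat) (x : 'I_m -> T -> R) : Prop :=
  indep_vec P (fun (_ : 'I_1) t => norm2 (rvec x t))
              (fun i t => rdir x t i 0).

From HB Require Import structures.
From mathcomp Require Import all_boot all_order all_algebra.
From mathcomp Require Import all_classical all_reals all_analysis.
From mathcomp Require Import measurable_realfun.
Set Implicit Arguments. Unset Strict Implicit. Unset Printing Implicit Defensive.
Import Order.TTheory GRing.Theory Num.Theory.
Local Open Scope classical_set_scope.
Local Open Scope ring_scope.

(* Write x = |x| u with u the direction of x.  Since x has identity covariance,
   E |Q x|^2 = tr (Q^T Q), which for an orthogonal projection Q is its rank, at
   most 2 here; in particular E |x|^2 = m.  The event {|Q u|^2 >= c} lies in the
   sigma-algebra generated by u, so independence of |x| and u gives
   E [|x|^2 ; |Q u|^2 >= c] = m P(|Q u|^2 >= c), and therefore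
   c m P(|Q u|^2 >= c) <= E [|x|^2 |Q u|^2] = E |Q x|^2 <= 2. *)

Section integral_mrestr.
Local Open Scope ereal_scope.
Context d (T : measurableType d) (R : realType).
Variables (m : {measure set T -> \bar R}) (D E : set T).
Hypotheses (mD : measurable D) (mE : measurable E).

Let mDE : measurable (D `&` E). Proof. exact: measurableI. Qed.

Let integral_mrestr_indic A : measurable A ->
  \int[mrestr m mE]_(x in D) (\1_A x)%:E = \int[m]_(x in D `&` E) (\1_A x)%:E.
Proof. by move=> mA; rewrite !integral_indic// /mrestr setIA. Qed.

Import HBNNSimple.

Let integral_mrestr_nnsfun (h : {nnsfun T >-> R}) :
  \int[mrestr m mE]_(x in D) (h x)%:E = \int[m]_(x in D `&` E) (h x)%:E.
Proof.
under [LHS]eq_integral do rewrite fimfunE -fsumEFin//.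
under [RHS]eq_integral do rewrite fimfunE -fsumEFin//.
rewrite [LHS]ge0_integral_fsum//; last 2 first.
  - by move=> r; exact/measurable_EFinP/measurableT_comp.
  - by move=> n x _; rewrite EFinM nnfun_muleindic_ge0.
rewrite [RHS]ge0_integral_fsum//; last 2 first.
  - by move=> r; exact/measurable_EFinP/measurableT_comp.
  - by move=> n x _; rewrite EFinM nnfun_muleindic_ge0.
apply: eq_fsbigr => r _.
by rewrite !integralZl_indic_nnsfun//= integral_mrestr_indic.
Qed.

Lemma ge0_integral_mrestr (f : T -> \bar R) (mf : measurable_fun D f) :
    (forall x, D x -> 0 <= f x) ->
  \int[mrestr m mE]_(x in D) f x = \int[m]_(x in D `&` E) f x.
Proof.
move=> f0; pose f_ := nnsfun_approx mD mf.
transitivity (limn (fun n => \int[mrestr m mE]_(x in D) (f_ n x)%:E)).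
  rewrite -monotone_convergence//=.
  - apply: eq_integral => x /[!inE] xD; apply/esym/cvg_lim => //=.
    exact: cvg_nnsfun_approx.
  - by move=> n; apply: measurableT_comp => //; exact: measurable_funTS.
  - by move=> n x _; rewrite lee_fin.
  - by move=> x _ a b ab; rewrite lee_fin//; exact/lefP/nd_nnsfun_approx.
rewrite (_ : \int[m]_(x in D `&` E) _ =
    limn (fun n => \int[m]_(x in D `&` E) (f_ n x)%:E)); last first.
  rewrite -monotone_convergence//=.
  - apply: eq_integral => x; rewrite inE => -[xD _]; apply/esym/cvg_lim => //.
    exact: cvg_nnsfun_approx.
  - by move=> n; exact/measurable_EFinP/measurable_funTS.
  - by move=> n x _; rewrite lee_fin.
  - by move=> x _ a b ab; rewrite lee_fin//; exact/lefP/nd_nnsfun_approx.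
by congr (limn _); apply/funext => n /=; rewrite integral_mrestr_nnsfun.
Qed.

End integral_mrestr.

Lemma mxtrace_idem (F : fieldType) (n : nat) (Q : 'M[F]_n) :
  Q *m Q = Q -> \tr Q = (\rank Q)%:R.
Proof.
move=> QQ; have := mulmx_base Q.
move: (col_base Q) (row_base Q) (col_base_full Q) (row_base_free Q).
move=> C B C_full B_free defQ.
have BCB : B *m C *m B = B.
  by apply: (row_full_inj C_full); rewrite !mulmxA defQ -mulmxA defQ QQ.
have BC : B *m C = 1%:M by apply: (row_free_inj B_free); rewrite mul1mx.
by rewrite -[in LHS]defQ mxtrace_mulC BC mxtrace1.
Qed.

Lemma mxtrace_orth_proj (R : realType) (k d : nat) (Q : 'M[R]_d) (V : 'M[R]_(k, d)) :
  is_orth_proj Q V -> \tr (Q^T *m Q) = (\rank V)%:R.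
Proof. by move=> [-> [QQ /eqmx_rank <-]]; rewrite QQ mxtrace_idem. Qed.

Section sqnorm.
Variable R : realType.

Lemma sqnorm_ge0 n (v : 'cV[R]_n) : 0 <= sqnorm v.
Proof. by apply: sumr_ge0 => i _; exact: sqr_ge0. Qed.

Lemma sqnorm_eq0 n (v : 'cV[R]_n) : (sqnorm v == 0) = (v == 0).
Proof.
apply/idP/eqP => [|->]; last by rewrite /sqnorm big1 // => i _; rewrite mxE expr0n.
rewrite psumr_eq0 => [/allP v0|i _]; last exact: sqr_ge0.
apply/matrixP => i j; rewrite (ord1 j) mxE.
by apply/eqP; rewrite -sqrf_eq0; exact: (implyP (v0 i (mem_index_enum i))).
Qed.

Lemma sqnormZ n (a : R) (v : 'cV[R]_n) : sqnorm (a *: v) = a ^+ 2 * sqnorm v.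
Proof. by rewrite /sqnorm mulr_sumr; apply: eq_bigr => i _; rewrite mxE exprMn. Qed.

Lemma sqnorm_mulmx m k (Q : 'M[R]_(k, m)) (v : 'cV[R]_m) :
  sqnorm (Q *m v) = \sum_l \sum_l' (Q^T *m Q) l l' * (v l 0 * v l' 0).
Proof.
rewrite /sqnorm; under eq_bigr => a _ do rewrite mxE expr2 big_distrl.
under eq_bigr => a _ do under eq_bigr => l _ do rewrite big_distrr.
rewrite exchange_big; apply: eq_bigr => l _; rewrite exchange_big.
apply: eq_bigr => l' _; rewrite mxE big_distrl; apply: eq_bigr => a _.
by rewrite mxE /= mulrACA.
Qed.

Lemma sqnorm_mulmx_normalize k m (Q : 'M[R]_(k, m)) (v : 'cV[R]_m) :
  sqnorm (Q *m v) = sqnorm v * sqnorm (Q *m ((norm2 v)^-1 *: v)).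
Proof.
rewrite -scalemxAr sqnormZ; have [v0|v0] := eqVneq v 0.
  by rewrite v0 mulmx0 /sqnorm !big1 ?mul0r// => i _; rewrite mxE expr0n.
by rewrite exprVn sqr_sqrtr ?sqnorm_ge0// mulrA mulfV ?mul1r ?sqnorm_eq0.
Qed.

End sqnorm.

Section second_moment.
Context d (T : measurableType d) (R : realType) (P : probability T R).

Lemma expectation_sumr (I : eqType) (r : seq I) (F : I -> T -> R) :
  (forall i, F i \in Lfun P 1) ->
  ('E_P[fun t => (\sum_(i <- r) F i t)%R] = \sum_(i <- r) 'E_P[F i])%E.
Proof.
move=> F1; rewrite -fct_sumE -(big_map F xpredT id) expectation_sum ?big_map//.
by move=> _ /mapP[i _ ->].
Qed.

Variables (m : nat) (x : 'I_m -> {RV P >-> R}).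
Hypothesis x_moments : mean0_idcov x.

Let xx_Lfun1 i j : (x i \* x j)%R \in Lfun P 1.
Proof. by case: x_moments => x2 _; apply: Lfun2_mul_Lfun1. Qed.

Lemma expectation_mul_mean0_idcov i j :
  ('E_P[x i \* x j] = ((i == j)%:R)%:E)%E.
Proof.
case: x_moments => x2 [x0 /(_ i j)]; have x1 k : (x k : T -> R) \in Lfun P 1.
  by apply: Lfun_subset12 (x2 k); exact: fin_num_measure.
by rewrite covarianceE ?x1 ?xx_Lfun1// x0 x0 mule0 sube0.
Qed.

Lemma expectation_sqnorm_mulmx k (Q : 'M[R]_(k, m)) :
  ('E_P[fun t => sqnorm (Q *m rvec (fun i => x i) t)] = (\tr (Q^T *m Q))%:E)%E.
Proof.
pose C := Q^T *m Q.
have -> : (fun t => sqnorm (Q *m rvec (fun i => x i) t)) =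
    (fun t => \sum_l \sum_l' (C l l' \o* (x l \* x l'))%R t).
  apply/funext => t; rewrite sqnorm_mulmx; apply: eq_bigr => l _.
  by apply: eq_bigr => l' _; rewrite /rvec !mxE /= mulrC.
rewrite expectation_sumr => [|l]; last first.
  by rewrite -fct_sumE; apply: rpred_sum => l' _; exact: Lfun_scale.
under eq_bigr => l _.
  rewrite expectation_sumr => [|l']; last exact: Lfun_scale.
  under eq_bigr => l' _.
    rewrite expectationZl// expectation_mul_mean0_idcov -EFinM.
    over.
  rewrite sumEFin (bigD1 l)//= eqxx mulr1 big1 ?addr0 => [|l' /negbTE]; last first.
    by rewrite eq_sym => ->; rewrite mulr0.
  over.
by rewrite sumEFin.
Qed.

End second_moment.

Section measurable_rvec.
Context d (T : measurableType d) (R : realType).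
Variables (m : nat) (f : 'I_m -> T -> R).
Hypothesis mf : forall i, measurable_fun setT (f i).

Lemma measurable_sqnorm_mulmx k (Q : 'M[R]_(k, m)) :
  measurable_fun setT (fun t => sqnorm (Q *m rvec f t)).
Proof.
under eq_fun => t do rewrite sqnorm_mulmx.
apply: measurable_sum => l; apply: measurable_sum => l'.
under eq_fun => t do rewrite /rvec !mxE.
by apply: measurable_funM => //; exact: measurable_funM.
Qed.

Lemma measurable_sqnorm_rvec : measurable_fun setT (fun t => sqnorm (rvec f t)).
Proof.
under [X in measurable_fun _ X]eq_fun => t do rewrite -[rvec f t]mul1mx.
exact: measurable_sqnorm_mulmx.
Qed.

Lemma measurable_norm2_rvec : measurable_fun setT (fun t => norm2 (rvec f t)).
Proof.
have -> : (fun t => norm2 (rvec f t)) = (fun t => sqnorm (rvec f t) `^ 2^-1).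
  by apply/funext => t; rewrite powR12_sqrt// sqnorm_ge0.
exact: measurableT_comp (measurable_powR _) measurable_sqnorm_rvec.
Qed.

Lemma measurable_rdir i : measurable_fun setT (fun t => rdir f t i 0).
Proof.
have -> : (fun t => rdir f t i 0) = (fun t => norm2 (rvec f t) `^ (-1) * f i t).
  by apply/funext => t; rewrite /rdir /rvec !mxE powR_inv1// sqrtr_ge0.
apply: measurable_funM => //.
exact: measurableT_comp (measurable_powR _) measurable_norm2_rvec.
Qed.

Lemma box_measurable (B : 'I_m -> set R) :
  (forall i, measurable (B i)) -> measurable (box f B).
Proof.
move=> mB; have -> : box f B = \bigcap_(i in [set: 'I_m]) (f i @^-1` B i).
  by apply/seteqP; split => t /= ft i; [move=> _|]; exact: ft.
apply: fin_bigcap_measurable => [|i _]; first exact: finite_finset.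
by rewrite -[X in measurable X]setTI; exact: mf.
Qed.

End measurable_rvec.

Section norm_direction_independence.
Context d (T : measurableType d) (R : realType) (P : probability T R).
Variables (m : nat) (f : 'I_m -> T -> R).
Hypothesis mf : forall i, measurable_fun setT (f i).
Hypothesis f_indep : norm_dir_indep P f.

Let N t := norm2 (rvec f t).
Let U i t := rdir f t i 0.

Definition rdir_boxes := [set A | exists2 B : 'I_m -> set R,
  (forall i, measurable (B i)) & A = box U B].

Let rdir_boxes_measurable : rdir_boxes `<=` measurable.
Proof.
by move=> _ [B mB ->]; apply: box_measurable => // i; exact: measurable_rdir.
Qed.

Let rdir_boxesT : rdir_boxes setT.
Proof. by exists (fun _ => setT) => //; apply/seteqP; split => t. Qed.

Let rdir_boxes_setI_closed : setI_closed rdir_boxes.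
Proof.
move=> _ _ [B mB ->] [C mC ->]; exists (fun i => B i `&` C i).
  by move=> i; exact: measurableI.
apply/seteqP; split => t /=; first by move=> [Bt Ct] i; split; [exact: Bt|exact: Ct].
by move=> BCt; split => i; have [] := BCt i.
Qed.

Lemma rdir_event_sigma k (Q : 'M[R]_(k, m)) c :
  <<s rdir_boxes >> [set t | c <= sqnorm (Q *m rdir f t)].
Proof.
pose T' := g_sigma_algebraType rdir_boxes.
have mU i : measurable_fun (setT : set T') (U i : T' -> R).
  move=> _ B mB; apply: sub_sigma_algebra.
  exists (fun j => if j == i then B else setT) => [j|]; first by case: ifP.
  apply/seteqP; split => t /=; first by move=> [_ Bt] j; case: ifP => // /eqP ->.
  by move=> Bt; split => //; have := Bt i; rewrite eqxx.
have rdirU t : rdir f t = rvec U t.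
  by apply/matrixP => i j; rewrite /rvec mxE (ord1 j).
have := measurable_fun_ler (measurable_cst c) (measurable_sqnorm_mulmx mU Q)
  measurableT (Y := [set true]) I.
congr (<<s _ >> _); apply/seteqP; split => t /=; rewrite rdirU; first by case.
by move=> ct; split.
Qed.

Lemma rdir_sigma_measurable : <<s rdir_boxes >> `<=` measurable.
Proof.
exact: (smallest_sub (@sigma_algebra_measurable _ T) rdir_boxes_measurable).
Qed.

Let measurable_N_preimage A : measurable A -> measurable (N @^-1` A).
Proof.
by move=> mA; rewrite -[X in measurable X]setTI; exact: measurable_norm2_rvec.
Qed.

Lemma norm2_indep_rdir_sigma A E : measurable A -> <<s rdir_boxes >> E ->
  P (N @^-1` A `&` E) = (P (N @^-1` A) * P E)%E.
Proof.
move=> mA sE; have mNA := measurable_N_preimage mA.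
pose c := NngNum (fine_ge0 (measure_ge0 P (N @^-1` A))).
suff : P (E `&` N @^-1` A) = ((fine (P (N @^-1` A)))%:E * P E)%E.
  by rewrite fineK ?fin_num_measure// setIC.
(* Two finite measures agreeing on the pi-system of direction boxes agree on
   the sigma-algebra it generates. *)
change (mrestr P mNA E = mscale c P E).
apply: (@g_sigma_algebra_measure_unique _ _ _ rdir_boxes rdir_boxes_measurable
  (fun _ => setT) (fun _ => rdir_boxesT)) => //.
- by apply/seteqP; split => // t _; exists 0%N.
- move=> _ [B mB ->].
  change (P (box U B `&` N @^-1` A) = (fine (P (N @^-1` A)))%:E * P (box U B))%E.
  have boxN : box (fun (_ : 'I_1) t => N t) (fun _ => A) = N @^-1` A.
    by apply/seteqP; split => t /=; [move=> NAt; exact: (NAt ord0)|move=> NAt i].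
  have := f_indep (fun _ => mA) mB.
  by rewrite boxN fineK ?fin_num_measure// setIC muleC.
- move=> k; change (P (setT `&` N @^-1` A) < +oo)%E.
  by rewrite setTI; apply: (le_lt_trans (probability_le1 _ mNA)); exact: ltry.
Qed.

Lemma integral_sqnorm_rdir_sigma E : <<s rdir_boxes >> E ->
  (\int[P]_(t in E) (sqnorm (rvec f t))%:E =
   P E * \int[P]_t (sqnorm (rvec f t))%:E)%E.
Proof.
move=> sE; have mE : measurable E by exact: rdir_sigma_measurable.
pose sq (y : R) := ((y ^+ 2)%:E : \bar R).
have msq : measurable_fun setT sq by apply/measurable_EFinP; exact: exprn_measurable.
have sq0 : {in setT, forall y, (0 <= sq y)%E} by move=> y _; rewrite lee_fin sqr_ge0.
have sqN t : (sqnorm (rvec f t))%:E = sq (N t).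
  by rewrite /sq /N /norm2 sqr_sqrtr// sqnorm_ge0.
have mN : measurable_fun setT N by exact: measurable_norm2_rvec.
pose c := NngNum (fine_ge0 (measure_ge0 P E)).
transitivity (\int[mrestr P mE]_(t in setT) (sqnorm (rvec f t))%:E)%E.
  rewrite ge0_integral_mrestr ?setTI// => [|t _]; last by rewrite lee_fin sqnorm_ge0.
  by apply/measurable_EFinP; exact: measurable_sqnorm_rvec.
(* Through the norm, restricting P to E just scales the law of |x| by P E. *)
transitivity (\int[pushforward (mrestr P mE) N]_(y in setT) sq y)%E.
  rewrite (ge0_integral_pushforward mN)// preimage_setT.
  by apply: eq_integral => t _; rewrite sqN.
transitivity (\int[pushforward (mscale c P) N]_(y in setT) sq y)%E.
  apply: eq_measure_integral => A mA _.
  change (P (N @^-1` A `&` E) = (fine (P E))%:E * P (N @^-1` A))%E.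
  by rewrite fineK ?fin_num_measure// norm2_indep_rdir_sigma// muleC.
rewrite (ge0_integral_pushforward mN)// preimage_setT ge0_integral_mscale//=.
  rewrite fineK ?fin_num_measure//; congr (_ * _)%E.
  by apply: eq_integral => t _; rewrite sqN.
- exact: measurableT_comp.
- by move=> t _; rewrite lee_fin sqr_ge0.
Qed.

End norm_direction_independence.

Section projected_direction_tail.
Context d (T : measurableType d) (R : realType) (P : probability T R).
Variables (m : nat) (x : 'I_m -> {RV P >-> R}).
Hypotheses (x_moments : mean0_idcov x)
  (x_indep : norm_dir_indep P (fun i => (x i : T -> R))).

Let xf i : T -> R := x i.
Let measurable_xf i : measurable_fun setT (xf i).
Proof. exact: measurable_funPT. Qed.

Let measurable_rdir_event k (Q : 'M[R]_(k, m)) (c : R) :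
  measurable [set t | c <= sqnorm (Q *m rdir xf t)].
Proof.
have sE : <<s rdir_boxes xf >> [set t | c <= sqnorm (Q *m rdir xf t)].
  exact: rdir_event_sigma.
exact: rdir_sigma_measurable sE.
Qed.

Lemma sqnorm_proj_rdir_markov k (Q : 'M[R]_(k, m)) (c : R) : 0 < c ->
  (c%:E * (P [set t | (c <= sqnorm (Q *m rdir xf t))%R] * (m%:R)%:E)
     <= (\tr (Q^T *m Q))%:E)%E.
Proof.
set E := [set t | _]; move=> c_gt0.
have sE : <<s rdir_boxes xf >> E by exact: rdir_event_sigma.
have mE : measurable E := measurable_rdir_event Q c.
have -> : (m%:R)%:E = (\int[P]_t (sqnorm (rvec xf t))%:E)%E.
  have := expectation_sqnorm_mulmx x_moments (1%:M : 'M[R]_m).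
  rewrite unlock trmx1 mul1mx mxtrace1 => <-.
  by apply: eq_integral => t _; rewrite mul1mx.
have c_ge0 := ltW c_gt0.
rewrite -integral_sqnorm_rdir_sigma// -ge0_integralZl_EFin//; last 2 first.
- by move=> t _; rewrite lee_fin sqnorm_ge0.
- apply: measurable_funTS; apply/measurable_EFinP; exact: measurable_sqnorm_rvec.
apply: (@le_trans _ _ (\int[P]_(t in E) (sqnorm (Q *m rvec xf t))%:E)%E).
  apply: ge0_le_integral => //.
  - by move=> t _; rewrite lee_fin mulr_ge0 ?sqnorm_ge0// ltW.
  - apply/measurable_EFinP/measurable_funM => //; apply: measurable_funTS.
    exact: measurable_sqnorm_rvec.
  - by apply/measurable_funTS/measurable_EFinP; exact: measurable_sqnorm_mulmx.
  - move=> t Et; rewrite lee_fin sqnorm_mulmx_normalize mulrC.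
    by apply: ler_wpM2l; [exact: sqnorm_ge0|exact: Et].
apply: (@le_trans _ _ (\int[P]_t (sqnorm (Q *m rvec xf t))%:E)%E).
  apply: ge0_subset_integral => // [|t _]; last by rewrite lee_fin sqnorm_ge0.
  by apply/measurable_EFinP; exact: measurable_sqnorm_mulmx.
by have := expectation_sqnorm_mulmx x_moments Q; rewrite unlock => ->.
Qed.

Lemma prob_sqnorm_proj_rdir_ge k (V : 'M[R]_(k, m)) (Q : 'M[R]_m) (r : nat) (c : R) :
  is_orth_proj Q V -> (\rank V <= r)%N -> 0 < c ->
  (P [set t | (c <= sqnorm (Q *m rdir xf t))%R] <= (r%:R / (m%:R * c))%:E)%E.
Proof.
move=> Q_proj rank_le c_gt0; set E := [set t | _].
(* For m = 0 the bound is r / 0 = 0, and the event is empty. *)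
have [m0|m_gt0] := posnP m.
  suff -> : E = set0 by rewrite measure0 lee_fin m0 mul0r invr0 mulr0.
  apply/seteqP; split => // t; rewrite /E /=; move: (Q *m rdir xf t).
  by rewrite m0 => v; rewrite /sqnorm big_ord0 leNgt c_gt0.
have := sqnorm_proj_rdir_markov Q c_gt0; rewrite (mxtrace_orth_proj Q_proj).
rewrite -(fineK (fin_num_measure P E (measurable_rdir_event _ _))) -!EFinM.
rewrite !lee_fin => markov.
rewrite ler_pdivlMr ?mulr_gt0 ?ltr0n// (mulrC m%:R c) mulrCA.
by apply: le_trans markov _; rewrite ler_nat.
Qed.

End projected_direction_tail.

Theorem lemma1 (R : realType) (m n q : nat)
  (S : 'cV[R]_m -> 'cV[R]_n -> 'cV[R]_q) (hS : bilinear_map S)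
  (K : set 'M[R]_(m, n)) (X : 'M[R]_(m, n))
  (hX : Nset S 2 X) (hXM : diffset K X) (hX0 : X != 0)
  (delta : R) (hd0 : 0 < delta) (hd1 : delta < 1)
  (dT : measure_display) (T : measurableType dT) (P : probability T R)
  (x : 'I_m -> {RV P >-> R}) (y : 'I_n -> {RV P >-> R})
  (hx : mean0_idcov x) (hy : mean0_idcov y)
  (hxy : indep_vec P (fun i => (x i : T -> R)) (fun j => (y j : T -> R)))
  (hxu : norm_dir_indep P (fun i => (x i : T -> R)))
  (hyv : norm_dir_indep P (fun j => (y j : T -> R)))
  (PC : 'M[R]_m) (hPC : is_orth_proj PC X^T)
  (PR : 'M[R]_n) (hPR : is_orth_proj PR X) :
  (P [set t | (1 - delta <= sqnorm (PC *m rdir (fun i => (x i : T -> R)) t))%R]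
     <= (2 / (m%:R * (1 - delta)))%:E)%E /\
  (P [set t | (1 - delta <= sqnorm (PR *m rdir (fun j => (y j : T -> R)) t))%R]
     <= (2 / (n%:R * (1 - delta)))%:E)%E.
Proof.
have c_gt0 : 0 < 1 - delta by rewrite subr_gt0.
have [rankX _] := hX.
split; last exact: (prob_sqnorm_proj_rdir_ge (r := 2) hy hyv hPR rankX c_gt0).
by apply: (prob_sqnorm_proj_rdir_ge (r := 2) hx hxu hPC _ c_gt0); rewrite mxrank_tr.
Qed.
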